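(* Let $(\Omega,\mathcal{F},\mathbb{P})$ be a nonatomic probability space, let $u:\mathbb{R}\to\mathbb{R}\cup\{-\infty\}$ be a utility function bounded from above, let $\alpha\in\mathbb{R}$ be such that $u(x)\ge\alpha$ for some $x\in\mathbb{R}$, and let $\mathcal{A}_u^\infty=\{X\in L^\infty:\mathbb{E}[u(X)]\ge\alpha\}$. Assume that either $u(x)\le\alpha$ for all $x\in\mathbb{R}$ or that $u$ attains the value $-\infty$. Then, for any traded asset $S=(S_0,S_T)$ with $S_T\in L^\infty$ such that $\rho_{\mathcal{A}_u^\infty,S}$ is finite-valued on $L^\infty$, we have $\mathrm{Index}_{\mathrm{fin}}(\rho_{\mathcal{A}_u^\infty,S})=\infty$.
   Context: A utility function is a nonconstant, increasing, concave function $u:\mathbb{R}\to\mathbb{R}\cup\{-\infty\}$. A traded asset is $S=(S_0,S_T)$ with $S_0>0$, $S_T\ge0$ a.s., $S_T\ne0$. For $\mathcal{B}\subset L^\infty$, $\rho_{\mathcal{B},S}(X)=\inf\{m\in\mathbb{R}:X+\frac{m}{S_0}S_T\in\mathcal{B}\}$. For a convex, law-invariant acceptance set $\mathcal{A}\subset L^\infty$ (nonempty proper, $\mathcal{A}+L^\infty_+\subset\mathcal{A}$, closed under equality in law) with $\rho_{\mathcal{A},S}$ finite-valued on $L^\infty$, the index of finiteness is $\mathrm{Index}_{\mathrm{fin}}(\rho_{\mathcal{A},S})=\inf\{p\in[1,\infty):\mathrm{Cl}_p(\mathcal{A})\text{ has nonempty interior in }L^p\}$, where $\mathrm{Cl}_p(\mathcal{A})$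 is the closure of $\mathcal{A}$ in $L^p$ and $\inf\emptyset=\infty$. *)

From HB Require Import structures.
From mathcomp Require Import all_boot all_order all_algebra.
From mathcomp Require Import all_classical all_reals all_analysis.
Set Implicit Arguments. Unset Strict Implicit. Unset Printing Implicit Defensive.
Import Order.TTheory GRing.Theory Num.Theory.
Local Open Scope classical_set_scope.
Local Open Scope ring_scope.

Definition nonatomic d (T : measurableType d) (R : realType)
    (P : probability T R) : Prop :=
  forall A : set T, measurable A -> (0 < P A)%E ->
    exists B : set T, [/\ measurable B, B `<=` A & (0 < P B < P A)%E].

Definition utility (R : realType) (u : R -> \bar R) : Prop :=
  [/\ (forall x, u x != +oo%E),
      (exists x y, u x != u y),
      (forall x y, x <= y -> (u x <= u y)%E) &
      (forall (x y l : R), (0 < l)%R /\ (l < 1)%R ->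
         (l%:E * u x + (1 - l)%R%:E * u y <= u (l * x + (1 - l) * y)%R)%E)].

(* L^p as a set of (representatives) real random variables, p in [1,+oo]. *)
Definition Lp d (T : measurableType d) (R : realType)
    (P : probability T R) (p : \bar R) : set (T -> R) :=
  [set X | measurable_fun setT X /\ finite_norm P p X].

Definition acc_u d (T : measurableType d) (R : realType)
    (P : probability T R) (u : R -> \bar R) (alpha : R) : set (T -> R) :=
  [set X | Lp P +oo%E X /\ (alpha%:E <= \int[P]_w u (X w))%E].

Definition traded_asset d (T : measurableType d) (R : realType)
    (P : probability T R) (S0 : R) (ST : T -> R) : Prop :=
  [/\ 0 < S0, measurable_fun setT ST,
      (\forall w \ae P, 0 <= ST w) & ~ (\forall w \ae P, ST w = 0)].

Definition rho d (T : measurableType d) (R : realType)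
    (B : set (T -> R)) (S0 : R) (ST : T -> R) (X : T -> R) : \bar R :=
  ereal_inf [set m%:E | m in [set m : R | B (fun w => X w + m / S0 * ST w)]].

Definition rho_finite_on_Linf d (T : measurableType d) (R : realType)
    (P : probability T R) (B : set (T -> R)) (S0 : R) (ST : T -> R) : Prop :=
  forall X, Lp P +oo%E X -> rho B S0 ST X \is a fin_num.

Definition Clp d (T : measurableType d) (R : realType)
    (P : probability T R) (p : \bar R) (B : set (T -> R)) : set (T -> R) :=
  [set X | Lp P p X /\ forall e : R, 0 < e ->
     exists Y, B Y /\ ('N[P]_p[EFin \o (X \- Y)%R] < e%:E)%E].

Definition nonempty_interior_Lp d (T : measurableType d) (R : realType)
    (P : probability T R) (p : \bar R) (C : set (T -> R)) : Prop :=
  exists X, Lp P p X /\ exists e : R, 0 < e /\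
    forall Y, Lp P p Y -> ('N[P]_p[EFin \o (Y \- X)%R] < e%:E)%E -> C Y.

Definition Index_fin d (T : measurableType d) (R : realType)
    (P : probability T R) (B : set (T -> R)) : \bar R :=
  ereal_inf [set p%:E | p in
    [set p : R | 1 <= p /\ nonempty_interior_Lp P p%:E (Clp P p%:E B)]].

From HB Require Import structures.
From mathcomp Require Import all_boot all_order all_algebra.
From mathcomp Require Import all_classical all_reals all_analysis.
From mathcomp Require Import lra.
Import Order.TTheory GRing.Theory Num.Theory.
Local Open Scope classical_set_scope.
Local Open Scope ring_scope.

(* Since [u] is bounded above by [M] and either never exceeds [alpha] or takes
   the value [-oo], a position that falls below some level [c] with
   probability [q > 0] has expected utility at most [M + (u c - M) q < alpha].
   Hence every acceptable position is almost surely above [c].  Now let [X]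
   be in the interior of the [L^p]-closure with radius [e].  Nonatomicity
   gives a set [E] of tiny positive probability on which [X] is bounded, and
   subtracting a large constant on [E] moves [X] by less than [e] in [L^p]
   while making it at least [1] below [c] on [E].  Any acceptable [Z] then
   differs from it by at least [1] on almost all of [E], so its [L^p]-distance
   is at least [P E ^ (1/p)]: the perturbed variable is not in the closure. *)

Section integral_pointwise.
Context d (T : measurableType d) (R : realType).
Variable mu : {measure set T -> \bar R}.
Local Open Scope ereal_scope.

(* No measurability is needed: [u \o Z] below is not known to be measurable. *)
Lemma ge0_le_integral_pointwise (f g : T -> \bar R) :
  (forall x, 0 <= f x) -> (forall x, f x <= g x) ->
  \int[mu]_x f x <= \int[mu]_x g x.
Proof.
move=> f0 fg; have g0 x : 0 <= g x by exact: le_trans (f0 x) (fg x).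
rewrite !ge0_integralTE//; apply: ereal_sup_le => _ [h hf <-].
by exists h => //= x; exact: le_trans (hf x) (fg x).
Qed.

Lemma le_integral_pointwise (f g : T -> \bar R) :
  (forall x, f x <= g x) -> \int[mu]_x f x <= \int[mu]_x g x.
Proof.
move=> fg; rewrite (integralE _ _ f) (integralE _ _ g).
apply: leeB; apply: ge0_le_integral_pointwise.
- by move=> x; rewrite funeposE le_max lexx orbT.
- by move=> x; apply: (@funepos_le _ _ setT) => //; rewrite inE.
- by move=> x; rewrite funenegE le_max lexx orbT.
- by move=> x; apply: (@funeneg_le _ _ setT) => //; rewrite inE.
Qed.

End integral_pointwise.

Section probability_facts.
Context {d} {T : measurableType d} {R : realType} (P : probability T R).

Lemma measurable_le_cst (Z : T -> R) (c : R) :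
  measurable_fun setT Z -> measurable [set w | Z w <= c].
Proof.
by move=> mZ; rewrite -[X in measurable X]setTI; exact: measurable_fun_le.
Qed.

Lemma probability_fineK {A : set T} : measurable A -> P A = (fine (P A))%:E.
Proof. by move=> mA; rewrite fineK//; exact: fin_num_measure. Qed.

Lemma measureD_null (A N : set T) : measurable A -> measurable N ->
  P N = 0%E -> P (A `\` N) = P A.
Proof.
move=> mA mN PN0; rewrite [RHS](measureDI _ mA mN).
by rewrite (@subset_measure0 _ _ _ _ (A `&` N) N) ?adde0//; exact: measurableI.
Qed.

Lemma integral_cst_add_indic (a b : R) (F : set T) : measurable F ->
  (\int[P]_x ((a + b * \1_F x)%:E) = a%:E + b%:E * P F)%E.
Proof.
move=> mF; under eq_integral do rewrite EFinD.
rewrite integralD_EFin//; last 2 first.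
- exact: finite_measure_integrable_cst.
- apply: (eq_integrable _ (fun x => (b%:E * (\1_F x)%:E)%E)) => //.
  by apply/integrableZl/integrable_indic.
congr (_ + _)%E.
  rewrite [LHS](_ : _ = \int[P]_x (cst a%:E) x)%E//.
  rewrite integral_cst// -[RHS]mule1; congr (_ * _)%E.
  exact: probability_setT.
rewrite (eq_integral (fun x => (b%:E * (\1_F x)%:E)%E))//.
by rewrite integralZl ?integral_indic ?setIT//; exact: integrable_indic.
Qed.

Lemma exists_le_measure_gt0 (X : T -> R) : measurable_fun setT X ->
  exists N : R, (0 < P [set w | (X w <= N)%R])%E.
Proof.
move=> mX; apply: contrapT => noN.
have null_le m : P [set w | X w <= m%:R] = 0%E.
  apply/eqP; rewrite eq_le measure_ge0 andbT leNgt; apply/negP => PXm.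
  by apply: noN; exists m%:R.
have : P.-negligible setT.
  apply: (@negligibleS _ _ _ _ (\bigcup_m [set w | X w <= m%:R])).
    move=> w _; exists (Num.truncn `|X w|).+1 => //=.
    by apply: le_trans (ler_norm (X w)) _; apply/ltW; exact: truncnS_gt.
  apply: negligible_bigcup => m.
  exists [set w | X w <= m%:R].
  by split; [exact: measurable_le_cst | exact: null_le |].
move=> /(measure_negligible measurableT) PT0.
by have := probability_setT P; rewrite PT0 => /eqP; rewrite eq_sym onee_eq0.
Qed.

Section nonatomic.
Hypothesis nonatomicP : nonatomic P.

Lemma nonatomic_halve (A : set T) : measurable A -> (0 < P A)%E ->
  exists B, [/\ measurable B, B `<=` A, 0 < fine (P B) &
                2 * fine (P B) <= fine (P A)].
Proof.
move=> mA PA0; have [B [mB BA /andP[PB0 PBA]]] := nonatomicP _ mA PA0.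
have mAB : measurable (A `\` B) by exact: measurableD.
have PAE : fine (P A) = fine (P B) + fine (P (A `\` B)).
  rewrite -fineD ?fin_num_measure// -measureU//; last first.
    by apply/seteqP; split => w // [? []].
  by rewrite setDUK.
move: PB0 PBA; rewrite (probability_fineK mA) (probability_fineK mB) !lte_fin.
case: (leP (2 * fine (P B)) (fine (P A))) => halfB PB0 PBA.
  by exists B.
by exists (A `\` B); split; [exact: mAB | move=> w [] | lra | lra].
Qed.

Lemma exists_measure_le_halfpow (A : set T) : measurable A -> (0 < P A)%E ->
  forall n : nat, exists E, [/\ measurable E, E `<=` A, 0 < fine (P E) &
                              fine (P E) * 2 ^+ n <= 1].
Proof.
move=> mA PA0; elim=> [|n [E [mE EA PE0 PEn]]].
  exists A; split => //; first by rewrite -lte_fin -probability_fineK.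
  by rewrite expr0 mulr1 -lee_fin -probability_fineK//; exact: probability_le1.
have [B [mB BE PB0 PBE]] : exists B, [/\ measurable B, B `<=` E,
    0 < fine (P B) & 2 * fine (P B) <= fine (P E)].
  by apply: nonatomic_halve; rewrite // (probability_fineK mE) lte_fin.
exists B; split => //; first exact: subset_trans BE EA.
have pow2_ge0 : 0 <= (2 : R) ^+ n by rewrite exprn_ge0.
by rewrite exprS; nra.
Qed.

Lemma exists_measure_lt (A : set T) (eps : R) : measurable A ->
  (0 < P A)%E -> 0 < eps ->
  exists E, [/\ measurable E, E `<=` A, 0 < fine (P E) & fine (P E) < eps].
Proof.
move=> mA PA0 eps0; set n := Num.truncn eps^-1.
have [E [mE EA PE0 PEn]] := exists_measure_le_halfpow _ mA PA0 n.
exists E; split => //.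
have epsn : eps^-1 < 2 ^+ n.
  apply: lt_le_trans (truncnS_gt _) _.
  by rewrite -natrX ler_nat; exact: ltn_expl.
rewrite -(ltr_pM2r (exprn_gt0 n (ltr0Sn R 1))); apply: le_lt_trans PEn _.
by move: epsn; rewrite -(ltr_pM2l eps0) mulfV ?gt_eqF.
Qed.

End nonatomic.

Section Lnorm.
Variable p : R.
Hypothesis p1 : 1 <= p.

Let p0 : 0 < p. Proof. exact: lt_le_trans ltr01 p1. Qed.

Lemma powR_Lnorm_scale_indic (k : R) (E : set T) : 0 < k -> measurable E ->
  (('N[P]_p%:E[EFin \o (fun w => k * \1_E w)%R]) `^ p = (k `^ p)%:E * P E)%E.
Proof.
move=> k0 mE; rewrite poweR_Lnorm ?gt_eqF//.
under eq_integral => w _.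
  rewrite (_ : (`|(EFin \o (fun w => k * \1_E w)%R) w| `^ p =
               ((k `^ p) * \1_E w)%:E)%E); last first.
    by rewrite /= indicE; case: (w \in E);
      rewrite ?mulr1 ?mulr0 ?normr0 ?gtr0_norm// powR0 ?gt_eqF.
  over.
rewrite (@integralZl_indic _ _ _ _ _ measurableT (fun _ => E))//.
  by rewrite integral_indic// setIT.
by move=> /ltW; rewrite leNgt powR_gt0.
Qed.

Lemma Lnorm_scale_indic_lt (k e : R) (E : set T) : 0 < k -> 0 < e ->
  measurable E -> k `^ p * fine (P E) < e `^ p ->
  ('N[P]_p%:E[EFin \o (fun w => k * \1_E w)%R] < e%:E)%E.
Proof.
move=> k0 e0 mE small; rewrite ltNge; apply/negP => large.
have : ((e%:E) `^ p <= ('N[P]_p%:E[EFin \o (fun w => k * \1_E w)%R]) `^ p)%E.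
  apply: gt0_ler_poweR => //; first exact: ltW.
    by rewrite in_itv /= lee_fin (ltW e0) leey.
  by rewrite in_itv /= Lnorm_ge0 leey.
rewrite powR_Lnorm_scale_indic// poweR_EFin (probability_fineK mE) -EFinM.
by rewrite lee_fin leNgt small.
Qed.

Lemma measure_le_powR_Lnorm (f : T -> R) (A : set T) : measurable A ->
  (forall w, A w -> 1 <= `|f w|) -> (P A <= 'N[P]_p%:E[EFin \o f] `^ p)%E.
Proof.
move=> mA fA1; rewrite poweR_Lnorm ?gt_eqF//.
have <- : (\int[P]_w (\1_A w)%:E = P A)%E by rewrite integral_indic// setIT.
apply: ge0_le_integral_pointwise => w; first by rewrite lee_fin.
rewrite indicE; case: (boolP (w \in A)) => [/set_mem Aw|_]; last first.
  exact: poweR_ge0.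
by rewrite /= lee_fin; apply: le_trans (fA1 _ Aw) (le1r_powR (fA1 _ Aw) p1).
Qed.

Lemma measure_root_le_Lnorm (f : T -> R) (A : set T) : measurable A ->
  (forall w, A w -> 1 <= `|f w|) ->
  ((fine (P A) `^ p^-1)%:E <= 'N[P]_p%:E[EFin \o f])%E.
Proof.
move=> mA fA1; rewrite -poweR_EFin -probability_fineK//.
rewrite -[leRHS](@poweRe1 _ _ (Lnorm_ge0 _ _ _)).
rewrite -(mulfV (lt0r_neq0 p0)) poweRrM.
apply: gt0_ler_poweR; first by rewrite invr_ge0 ltW.
- by rewrite in_itv /= measure_ge0 leey.
- by rewrite in_itv /= poweR_ge0 leey.
- exact: measure_le_powR_Lnorm.
Qed.

Lemma Lp_sub (X Y : T -> R) : Lp P p%:E X -> Lp P p%:E Y -> Lp P p%:E (X \- Y).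
Proof.
move=> [mX LpX] [mY LpY].
split; first exact: measurable_realfun.measurable_funB.
rewrite /finite_norm.
apply: le_lt_trans (@eminkowski _ _ _ P X (\- Y) p%:E _ _ _) _ => //.
  exact: measurable_realfun.measurable_funN.
rewrite (eq_Lnorm P p%:E (f := EFin \o \- Y) (g := (\- (EFin \o Y))%E)).
  by rewrite oppe_Lnorm lte_add_pinfty.
by move=> w /=; rewrite EFinN.
Qed.

Lemma Clp_no_interior (A : set (T -> R)) (c : R) : nonatomic P ->
  (forall Z, A Z -> measurable_fun setT Z /\ P [set w | Z w <= c] = 0%E) ->
  ~ nonempty_interior_Lp P p%:E (Clp P p%:E A).
Proof.
move=> nonatomicP Ac [X [LpX [e [e0 ballX]]]]; have [mX _] := LpX.
have [N PXN] := exists_le_measure_gt0 _ mX.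
pose k := `|N - c| + 1.
have k0 : 0 < k by rewrite /k; have := normr_ge0 (N - c); lra.
have [E [mE EXN PE0 PEsmall]] := exists_measure_lt nonatomicP _ _
  (measurable_le_cst X N mX) PXN (divr_gt0 (powR_gt0 p e0) (powR_gt0 p k0)).
pose kE w := k * \1_E w.
have kE_small : ('N[P]_p%:E[EFin \o kE] < e%:E)%E.
  by apply: Lnorm_scale_indic_lt => //; rewrite -ltr_pdivlMl ?powR_gt0// mulrC.
have LpkE : Lp P p%:E kE.
  split; first exact: measurable_realfun.measurable_funM.
  exact: lt_trans kE_small (ltry _).
pose Y := X \- kE.
have YX : ('N[P]_p%:E[EFin \o (Y \- X)%R] < e%:E)%E.
  rewrite (eq_Lnorm P p%:E (g := (\- (EFin \o kE))%E)) ?oppe_Lnorm//.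
  by move=> w /=; rewrite /Y addrAC subrr add0r EFinN.
have [_ closeY] := ballX Y (Lp_sub _ _ LpX LpkE) YX.
have [Z [AZ YZ]] := closeY _ (powR_gt0 p^-1 PE0).
have [mZ Zc0] := Ac Z AZ.
have mZc := measurable_le_cst Z c mZ.
suff : ((fine (P E) `^ p^-1)%:E <= 'N[P]_p%:E[EFin \o (Y \- Z)%R])%E.
  by rewrite leNgt YZ.
rewrite -(measureD_null _ _ mE mZc Zc0).
apply: measure_root_le_Lnorm => [|w [Ew /negP]]; first exact: measurableD.
rewrite -ltNge => cZw; have XNw : X w <= N := EXN w Ew.
have kEw : kE w = k by rewrite /kE indicE (mem_set Ew) mulr1.
have Nc := ler_norm (N - c).
by rewrite /Y /= kEw ler0_norm /k; lra.
Qed.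

End Lnorm.
End probability_facts.

Section utility.
Context {R : realType} {u : R -> \bar R} {alpha : R}.
Hypothesis uu : utility u.
Hypothesis u_bounded : exists M : R, forall x, (u x <= M%:E)%E.
Hypothesis u_low : (forall x, (u x <= alpha%:E)%E) \/ (exists x, u x = -oo%E).

(* [v] is a finite stand-in for [u c], which may be [-oo]. *)
Lemma utility_shortfall : exists c M, (forall x, (u x <= M%:E)%E) /\
  forall q, 0 < q -> q <= 1 ->
    exists v, (u c <= v%:E)%E /\ M + (v - M) * q < alpha.
Proof.
case: uu => u_finite [x [y uxy]] _ _; case: u_low => [u_le|[c uc]].
- have [c uc] : exists c, u c != alpha%:E.
    case: (eqVneq (u x) alpha%:E) => [ux|]; last by exists x.
    by exists y; rewrite -ux eq_sym.
  have uc_lt : (u c < alpha%:E)%E by rewrite lt_neqAle uc u_le.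
  exists c, alpha; split => // q q0 q1.
  move: uc_lt (u_finite c); case: (u c) => [r| |] //.
    by rewrite lte_fin => r_lt _; exists r; split => //; nra.
  by move=> _ _; exists (alpha - 1); split; [rewrite leNye | nra].
- have [M uM] := u_bounded; exists c, M; split => // q q0 q1.
  exists ((alpha - `|M| - 1) / q); split; first by rewrite uc leNye.
  have vq : (alpha - `|M| - 1) / q * q = alpha - `|M| - 1.
    by rewrite divfK // gt_eqF.
  have := ler_norm M; have := ler_norm (- M); rewrite normrN; nra.
Qed.

Lemma acc_u_level_null {d} {T : measurableType d} (P : probability T R) :
  exists c : R, forall Z, acc_u P u alpha Z -> P [set w | Z w <= c] = 0%E.
Proof.
have [c [M [uM shortfall]]] := utility_shortfall.
case: uu => _ _ u_nondecr _.
exists c => Z [[mZ _] EuZ]; set F := [set w | Z w <= c].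
have mF : measurable F := measurable_le_cst Z c mZ.
apply/eqP; rewrite eq_le measure_ge0 andbT leNgt; apply/negP => PF0.
have q0 : 0 < fine (P F).
  by apply: fine_gt0; rewrite PF0 (le_lt_trans (probability_le1 _ mF)) ?ltry.
have q1 : fine (P F) <= 1.
  by rewrite -lee_fin -(probability_fineK P) ?probability_le1.
have [v [ucv lt_alpha]] := shortfall _ q0 q1.
have : (\int[P]_w u (Z w) <= \int[P]_w ((M + (v - M) * \1_F w)%:E))%E.
  apply: le_integral_pointwise => w; rewrite indicE.
  case: (boolP (w \in F)) => [/set_mem Fw|_]; last by rewrite mulr0 addr0.
  by rewrite mulr1 addrC subrK; exact: le_trans (u_nondecr _ _ Fw) ucv.
rewrite integral_cst_add_indic// (probability_fineK P mF) -EFinM -EFinD.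
by move=> /(le_trans EuZ); rewrite lee_fin leNgt lt_alpha.
Qed.

End utility.

Theorem corollary6p4 (d : measure_display) (T : measurableType d)
    (R : realType) (P : probability T R) (u : R -> \bar R) (alpha : R)
    (S0 : R) (ST : T -> R) :
  nonatomic P ->
  utility u ->
  (exists M : R, forall x, (u x <= M%:E)%E) ->
  (exists x, (alpha%:E <= u x)%E) ->
  ((forall x, (u x <= alpha%:E)%E) \/ (exists x, u x = -oo%E)) ->
  traded_asset P S0 ST ->
  Lp P +oo%E ST ->
  rho_finite_on_Linf P (acc_u P u alpha) S0 ST ->
  Index_fin P (acc_u P u alpha) = +oo%E.
Proof.
move=> nonatomicP uu u_bounded _ u_low _ _ _.
have [c acc_null] := acc_u_level_null uu u_bounded u_low P.
rewrite /Index_fin (_ : [set p%:E | p in _] = set0) ?ereal_inf0//.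
apply/seteqP; split => // x [p [p1 interior] _].
apply: (Clp_no_interior P _ p1 _ c nonatomicP _ interior) => Z AZ.
by split; [case: AZ => -[] | exact: acc_null].
Qed.
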